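(* There is an absolute constant $c>0$ such that for all $n\ge 3$ and $\tau\ge 1$ there exist $\varepsilon>0$ and $n$ entities moving in $\mathbb{R}^1$ along piecewise-linear trajectories with vertices at common times $t_0<\dots<t_\tau$ for which every central trajectory has complexity at least $c\,\tau n^2$.
   Context: Setting: $\mathcal{X}$ is a set of $n$ entities, each moving in $\mathbb{R}^d$ along a piecewise-linear trajectory $\sigma:[t_0,t_\tau]\to\mathbb{R}^d$ with vertices at the common times $t_0<\dots<t_\tau$. A parameter $\varepsilon\ge 0$ is fixed. Two entities $\sigma,\psi$ are $\varepsilon$-connected at time $t$ if there is a sequence $\sigma=\sigma_0,\dots,\sigma_k=\psi$ of entities with $\|\sigma_j(t)\sigma_{j+1}(t)\|\le\varepsilon$ for all $j$. A trajectoid is a function $\mathcal{T}:[t_0,t_\tau]\to\mathcal{X}$ such that whenever $\mathcal{T}$ is discontinuous at time $t$, switching from $\sigma$ to $\psi$, the entities $\sigma,\psi$ are $\varepsilon$-connected at time $t$. $D(\sigma,t)=\max_{\psi\in\mathcal{X}}\|\sigma(t)\psi(t)\|$. A central trajectory is a trajectoid minimizing $\int_{t_0}^{t_\tau}D(\mathcal{T}(t),t)\,dt$. The complexity of a trajectoid is the number of pieces of the curve $t\mapsto\mathcal{T}(t)(t)$, i.e. the number of maximal time intervals on which $\mathcal{T}$ is a single entity and that entity moves linearly. *)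

From Stdlib Require Import Reals Lra List Relations.
Open Scope R_scope.

(* Entities are indexed by natural numbers sigma < n.  A configuration is
   traj : nat -> R -> R, where traj sigma u is the position (in R^1) of
   entity sigma at time u. *)

Definition piecewise_linear (n tau : nat) (t : nat -> R) (traj : nat -> R -> R) : Prop :=
  (forall k, (k < tau)%nat -> t k < t (S k)) /\
  (forall sigma k, (sigma < n)%nat -> (k < tau)%nat ->
     exists a b : R, forall u, t k <= u <= t (S k) -> traj sigma u = a * u + b).

Definition eps_close (eps : R) (n : nat) (traj : nat -> R -> R) (u : R)
  (sigma psi : nat) : Prop :=
  (sigma < n)%nat /\ (psi < n)%nat /\ Rabs (traj sigma u - traj psi u) <= eps.

Definition eps_connected (eps : R) (n : nat) (traj : nat -> R -> R) (u : R)
  (sigma psi : nat) : Prop :=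
  clos_refl_trans nat (eps_close eps n traj u) sigma psi.

Definition Dmax (n : nat) (traj : nat -> R -> R) (sigma : nat) (u : R) : R :=
  fold_right Rmax 0 (map (fun psi => Rabs (traj sigma u - traj psi u)) (seq 0 n)).

Definition near_value (T : R -> nat) (t0 t1 u : R) (sigma : nat) : Prop :=
  forall d, d > 0 -> exists s, t0 <= s <= t1 /\ Rabs (s - u) < d /\ T s = sigma.

(* Trajectoid: T maps [t0,t1] into the entities, and whenever T switches
   (is discontinuous) at time u, all entities it switches between are
   epsilon-connected at time u. *)
Definition trajectoid (eps : R) (n : nat) (traj : nat -> R -> R) (t0 t1 : R)
  (T : R -> nat) : Prop :=
  (forall u, t0 <= u <= t1 -> (T u < n)%nat) /\
  (forall u sigma psi, t0 <= u <= t1 ->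
     near_value T t0 t1 u sigma -> near_value T t0 t1 u psi ->
     eps_connected eps n traj u sigma psi).

Definition central (eps : R) (n : nat) (traj : nat -> R -> R) (t0 t1 : R)
  (T : R -> nat) : Prop :=
  trajectoid eps n traj t0 t1 T /\
  exists pr : Riemann_integrable (fun u => Dmax n traj (T u) u) t0 t1,
    forall T', trajectoid eps n traj t0 t1 T' ->
    forall pr' : Riemann_integrable (fun u => Dmax n traj (T' u) u) t0 t1,
      RiemannInt pr <= RiemannInt pr'.

Definition complexity_ge (traj : nat -> R -> R) (t0 t1 : R) (T : R -> nat)
  (x : R) : Prop :=
  forall (m : nat) (s : nat -> R) (ent : nat -> nat),
    s 0%nat = t0 -> s m = t1 ->
    (forall i, (i < m)%nat -> s i < s (S i)) ->
    (forall i, (i < m)%nat -> forall u, s i < u < s (S i) -> T u = ent i) ->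
    (forall i, (i < m)%nat -> exists a b : R,
        forall u, s i < u < s (S i) -> traj (ent i) u = a * u + b) ->
    x <= INR m.

(* In dimension one, D(s, t) is the half-width of the configuration plus the distance
   from s(t) to its centre. When eps exceeds the diameter every switch is allowed, so a
   central trajectory must follow an entity of minimal D on each of its pieces (otherwise
   it loses a positive amount of integral on some interval); hence every change of the
   unique minimiser of D forces a new piece. For n >= 5 take k = (n - 1) / 4: the k
   tangents at the integers to an upward parabola and the k tangents at the half-integers
   to a downward one have, along a parameter v in [0, k], extremes whose centre swings k
   times across 2k stationary entities. Driving v by a zigzag in time makes the unique
   minimiser change 2 k^2 times per slab, i.e. Omega(tau n^2) times; for n <= 4 two
   mirrored entities already give tau changes. *)

From Stdlib Require Import Reals Lra Lia List Relations Arith.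
From Coquelicot Require Import Coquelicot.
Open Scope R_scope.

Lemma fold_Rmax_ge (F : nat -> R) (l : list nat) (x : nat) :
  In x l -> F x <= fold_right Rmax 0 (map F l).
Proof.
  induction l as [|y l IH]; simpl; intros Hx; [contradiction|].
  destruct Hx as [<-|Hx]; [apply Rmax_l|].
  eapply Rle_trans; [apply IH; exact Hx | apply Rmax_r].
Qed.

Lemma fold_Rmax_lub (F : nat -> R) (l : list nat) (B : R) :
  0 <= B -> (forall x, In x l -> F x <= B) -> fold_right Rmax 0 (map F l) <= B.
Proof.
  intros HB; induction l as [|y l IH]; simpl; intros H; [lra|].
  apply Rmax_lub; [apply H; auto | apply IH; intros; apply H; auto].
Qed.

Lemma fold_Rmax_dist (F G : nat -> R) (l : list nat) (e : R) :
  0 <= e -> (forall x, In x l -> Rabs (F x - G x) <= e) ->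
  Rabs (fold_right Rmax 0 (map F l) - fold_right Rmax 0 (map G l)) <= e.
Proof.
  intros He; induction l as [|y l IH]; simpl; intros H.
  - rewrite Rminus_0_r, Rabs_R0; lra.
  - assert (H1 := H y (or_introl eq_refl)).
    assert (H2 : Rabs (fold_right Rmax 0 (map F l) - fold_right Rmax 0 (map G l)) <= e)
      by (apply IH; intros; apply H; auto).
    revert H1 H2; unfold Rmax; repeat destruct Rle_dec; unfold Rabs;
      repeat destruct Rcase_abs; intros; lra.
Qed.

Fixpoint argmin (f : nat -> R) (d : nat) (l : list nat) : nat :=
  match l with
  | nil => d
  | x :: l' => let y := argmin f d l' in if Rle_dec (f x) (f y) then x else y
  end.

Lemma argmin_in (f : nat -> R) (d : nat) (l : list nat) :
  argmin f d l = d \/ In (argmin f d l) l.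
Proof.
  induction l as [|x l IH]; simpl; [auto|].
  destruct Rle_dec; [auto|]. destruct IH; auto.
Qed.

Lemma argmin_le (f : nat -> R) (d : nat) (l : list nat) (x : nat) :
  In x l -> f (argmin f d l) <= f x.
Proof.
  induction l as [|y l IH]; simpl; intros Hx; [contradiction|].
  destruct Rle_dec as [h|h]; destruct Hx as [<-|Hx]; try lra.
  - eapply Rle_trans; [exact h | apply IH; auto].
  - apply IH; auto.
Qed.

Definition Lipschitz_on (f : R -> R) (a b M : R) : Prop :=
  forall u u', a <= u <= b -> a <= u' <= b -> Rabs (f u - f u') <= M * Rabs (u - u').

Lemma Lipschitz_continuity_pt (f : R -> R) (M x : R) :
  0 <= M -> (forall u u', Rabs (f u - f u') <= M * Rabs (u - u')) -> continuity_pt f x.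
Proof.
  intros HM H e He. exists (e / (M + 1)). split.
  - apply Rdiv_lt_0_compat; lra.
  - intros y [_ Hy]. simpl in *. unfold R_dist in *.
    eapply Rle_lt_trans; [apply H|].
    apply Rle_lt_trans with (M * (e / (M + 1))); [apply Rmult_le_compat_l; lra|].
    apply Rlt_le_trans with ((M + 1) * (e / (M + 1))); [|right; field; lra].
    apply Rmult_lt_compat_r; [apply Rdiv_lt_0_compat|]; lra.
Qed.

Definition clamp (a b u : R) : R := Rmax a (Rmin b u).

Lemma clamp_in (a b u : R) : a <= b -> a <= clamp a b u <= b.
Proof. intros; unfold clamp, Rmax, Rmin; repeat destruct Rle_dec; lra. Qed.

Lemma clamp_id (a b u : R) : a <= u <= b -> clamp a b u = u.
Proof. intros; unfold clamp, Rmax, Rmin; repeat destruct Rle_dec; lra. Qed.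

Lemma clamp_contract (a b u u' : R) :
  a <= b -> Rabs (clamp a b u - clamp a b u') <= Rabs (u - u').
Proof.
  intros; unfold clamp, Rmax, Rmin; repeat destruct Rle_dec; unfold Rabs;
    repeat destruct Rcase_abs; lra.
Qed.

(* Clamping extends [f] from [[a, b]] to a globally Lipschitz, hence continuous, function. *)
Lemma Lipschitz_on_ex_RInt (f : R -> R) (a b M : R) :
  a <= b -> 0 <= M -> Lipschitz_on f a b M -> ex_RInt f a b.
Proof.
  intros Hab HM HL.
  apply (ex_RInt_ext (fun u => f (clamp a b u))).
  { intros x Hx. rewrite Rmin_left, Rmax_right in Hx by lra. rewrite clamp_id; lra. }
  apply ex_RInt_Reals_1, continuity_implies_RiemannInt; auto.
  intros x _. apply (Lipschitz_continuity_pt _ M); auto. intros u u'.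
  eapply Rle_trans; [apply HL; apply clamp_in; lra|].
  apply Rmult_le_compat_l; auto. apply clamp_contract; lra.
Qed.

Lemma Lipschitz_on_minus (f g : R -> R) (a b M N : R) :
  Lipschitz_on f a b M -> Lipschitz_on g a b N ->
  Lipschitz_on (fun u => f u - g u) a b (M + N).
Proof.
  intros Hf Hg u u' Hu Hu'.
  replace (f u - g u - (f u' - g u')) with ((f u - f u') - (g u - g u')) by ring.
  rewrite Rmult_plus_distr_r.
  eapply Rle_trans; [apply Rabs_triang|]. rewrite Rabs_Ropp.
  apply Rplus_le_compat; auto.
Qed.

Lemma Lipschitz_positive_near (h : R -> R) (a b M u0 : R) :
  0 <= M -> a < b -> a <= u0 <= b -> 0 < h u0 -> Lipschitz_on h a b M ->
  exists a' b', a <= a' < b' /\ b' <= b /\ forall x, a' < x < b' -> h u0 / 2 <= h x.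
Proof.
  intros HM Hab Hu0 Hh HL.
  set (r := h u0 / (2 * (M + 1))).
  assert (Hr : 0 < r) by (unfold r; apply Rdiv_lt_0_compat; lra).
  assert (HMr : M * r <= h u0 / 2).
  { apply Rle_trans with ((M + 1) * r); [apply Rmult_le_compat_r; lra|].
    right; unfold r; field; lra. }
  exists (Rmax a (u0 - r)), (Rmin b (u0 + r)).
  split; [|split]; [split; [apply Rmax_l|] | apply Rmin_l |].
  - unfold Rmax, Rmin; repeat destruct Rle_dec; lra.
  - intros x Hx.
    assert (Hxr : a <= x <= b /\ Rabs (x - u0) <= r).
    { revert Hx; unfold Rmax, Rmin, Rabs; repeat destruct Rle_dec;
        repeat destruct Rcase_abs; intros; lra. }
    assert (Hd := HL x u0 (proj1 Hxr) Hu0).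
    assert (M * Rabs (x - u0) <= M * r) by (apply Rmult_le_compat_l; tauto).
    revert Hd; unfold Rabs at 1; destruct Rcase_abs; intros; lra.
Qed.

Lemma RInt_le_gap (f g : R -> R) (a0 b0 a b dl : R) :
  a0 <= a -> a < b -> b <= b0 -> ex_RInt f a0 b0 -> ex_RInt g a0 b0 ->
  (forall x, a0 < x < b0 -> g x <= f x) ->
  (forall x, a < x < b -> g x + dl <= f x) ->
  RInt g a0 b0 + dl * (b - a) <= RInt f a0 b0.
Proof.
  intros Ha Hab Hb Ef Eg Hle Hgap.
  set (h := fun x => f x - g x).
  assert (Eh : ex_RInt h a0 b0) by apply (ex_RInt_minus f g _ _ Ef Eg).
  assert (Eh1 : ex_RInt h a b0) by (apply (ex_RInt_Chasles_2 h a0); [lra | exact Eh]).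
  assert (Split1 : RInt h a0 b0 = RInt h a0 a + RInt h a b0).
  { rewrite <- (RInt_Chasles h a0 a b0); [reflexivity | | exact Eh1].
    apply (ex_RInt_Chasles_1 h a0 a b0); [lra | exact Eh]. }
  assert (Split2 : RInt h a b0 = RInt h a b + RInt h b b0).
  { rewrite <- (RInt_Chasles h a b b0); [reflexivity | |].
    - apply (ex_RInt_Chasles_1 h a b b0); [lra | exact Eh1].
    - apply (ex_RInt_Chasles_2 h a b b0); [lra | exact Eh1]. }
  assert (I1 : 0 <= RInt h a0 a).
  { apply RInt_ge_0; [lra | apply (ex_RInt_Chasles_1 h a0 a b0); [lra | exact Eh] |].
    intros x Hx; unfold h; assert (g x <= f x) by (apply Hle; lra); lra. }
  assert (I3 : 0 <= RInt h b b0).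
  { apply RInt_ge_0; [lra | apply (ex_RInt_Chasles_2 h a b b0); [lra | exact Eh1] |].
    intros x Hx; unfold h; assert (g x <= f x) by (apply Hle; lra); lra. }
  assert (I2 : dl * (b - a) <= RInt h a b).
  { replace (dl * (b - a)) with (RInt (fun _ => dl) a b)
      by (rewrite RInt_const; unfold scal; simpl; unfold mult; simpl; ring).
    apply RInt_le; [lra | apply ex_RInt_const
      | apply (ex_RInt_Chasles_1 h a b b0); [lra | exact Eh1] |].
    intros x Hx; unfold h; assert (g x + dl <= f x) by (apply Hgap; lra); lra. }
  assert (Diff : RInt h a0 b0 = RInt f a0 b0 - RInt g a0 b0)
    by (apply (RInt_minus f g _ _ Ef Eg)).
  lra.
Qed.
Lemma Lipschitz_on_weaken (f : R -> R) (a b M M' : R) :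
  M <= M' -> Lipschitz_on f a b M -> Lipschitz_on f a b M'.
Proof.
  intros HM H u u' Hu Hu'. eapply Rle_trans; [apply H; auto|].
  apply Rmult_le_compat_r; [apply Rabs_pos | exact HM].
Qed.

Lemma Lipschitz_on_concat (f : R -> R) (a b c M : R) :
  0 <= M -> Lipschitz_on f a b M -> Lipschitz_on f b c M -> Lipschitz_on f a c M.
Proof.
  intros HM Hab Hbc u u' Hu Hu'.
  destruct (Rle_dec u b), (Rle_dec u' b);
    [apply Hab; lra | | | apply Hbc; lra];
    replace (f u - f u') with ((f u - f b) + (f b - f u')) by ring;
    eapply Rle_trans; try apply Rabs_triang.
  - assert (Rabs (f u - f b) <= M * Rabs (u - b)) by (apply Hab; lra).
    assert (Rabs (f b - f u') <= M * Rabs (b - u')) by (apply Hbc; lra).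
    replace (Rabs (u - u')) with (Rabs (u - b) + Rabs (b - u'));
      [lra | unfold Rabs; repeat destruct Rcase_abs; lra].
  - assert (Rabs (f u - f b) <= M * Rabs (u - b)) by (apply Hbc; lra).
    assert (Rabs (f b - f u') <= M * Rabs (b - u')) by (apply Hab; lra).
    replace (Rabs (u - u')) with (Rabs (u - b) + Rabs (b - u'));
      [lra | unfold Rabs; repeat destruct Rcase_abs; lra].
Qed.

Lemma affine_Lipschitz_on (f : R -> R) (a b p q : R) :
  (forall u, a <= u <= b -> f u = p * u + q) -> Lipschitz_on f a b (Rabs p).
Proof.
  intros Hf u u' Hu Hu'. rewrite (Hf u Hu), (Hf u' Hu').
  replace (p * u + q - (p * u' + q)) with (p * (u - u')) by ring.
  rewrite Rabs_mult; lra.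
Qed.

Lemma increasing_le (tau : nat) (t : nat -> R) :
  (forall k, (k < tau)%nat -> t k < t (S k)) ->
  forall a b, (a <= b <= tau)%nat -> t a <= t b.
Proof.
  intros Ht a b [Hab Hb]. induction Hab; [lra|].
  apply Rle_trans with (t m); [apply IHHab; lia | left; apply Ht; lia].
Qed.

Lemma piecewise_linear_Lipschitz_entity (n tau : nat) (t : nat -> R)
  (traj : nat -> R -> R) (sigma : nat) :
  piecewise_linear n tau t traj -> (sigma < n)%nat ->
  exists M, 0 <= M /\ Lipschitz_on (traj sigma) (t 0%nat) (t tau) M.
Proof.
  intros [Ht Hlin] Hs.
  assert (Hk : forall k, (k <= tau)%nat ->
            exists M, 0 <= M /\ Lipschitz_on (traj sigma) (t 0%nat) (t k) M).
  { induction k as [|k IH]; intros Hk.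
    - exists 0. split; [lra|]. intros u u' Hu Hu'.
      replace u' with u by lra. rewrite !Rminus_diag, Rabs_R0; lra.
    - destruct (IH ltac:(lia)) as [M [HM HL]].
      destruct (Hlin sigma k Hs ltac:(lia)) as [p [q Hpq]].
      assert (Hp := Rabs_pos p).
      exists (M + Rabs p). split; [lra|].
      apply Lipschitz_on_concat with (t k); [lra | |].
      + apply Lipschitz_on_weaken with M; [lra | exact HL].
      + apply Lipschitz_on_weaken with (Rabs p); [lra |].
        apply affine_Lipschitz_on with q; exact Hpq. }
  apply Hk; lia.
Qed.

Lemma piecewise_linear_Lipschitz (n tau : nat) (t : nat -> R) (traj : nat -> R -> R) :
  piecewise_linear n tau t traj ->
  exists M, 0 <= M /\ forall sigma, (sigma < n)%nat ->
    Lipschitz_on (traj sigma) (t 0%nat) (t tau) M.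
Proof.
  intros HP.
  assert (Hn : forall n', (n' <= n)%nat -> exists M, 0 <= M /\
            forall sigma, (sigma < n')%nat -> Lipschitz_on (traj sigma) (t 0%nat) (t tau) M).
  { induction n' as [|n' IH]; intros Hn'.
    - exists 0; split; [lra | intros; lia].
    - destruct (IH ltac:(lia)) as [M [HM H]].
      destruct (piecewise_linear_Lipschitz_entity n tau t traj n' HP ltac:(lia))
        as [M' [HM' H']].
      exists (Rmax M M'); split; [eapply Rle_trans; [exact HM | apply Rmax_l]|].
      intros sigma Hs. destruct (Nat.eq_dec sigma n') as [->|Hne].
      + apply Lipschitz_on_weaken with M'; [apply Rmax_r | exact H'].
      + apply Lipschitz_on_weaken with M; [apply Rmax_l | apply H; lia]. }
  apply Hn; lia.
Qed.

Definition argminD (n : nat) (traj : nat -> R -> R) (u : R) : nat :=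
  argmin (fun sigma => Dmax n traj sigma u) 0%nat (seq 0 n).

Definition Dmin (n : nat) (traj : nat -> R -> R) (u : R) : R :=
  Dmax n traj (argminD n traj u) u.

Definition unique_minimiser (n : nat) (traj : nat -> R -> R) (u : R) (a : nat) : Prop :=
  (a < n)%nat /\
  forall sigma, (sigma < n)%nat -> sigma <> a -> Dmax n traj a u < Dmax n traj sigma u.

Lemma argminD_lt (n : nat) (traj : nat -> R -> R) (u : R) :
  (1 <= n)%nat -> (argminD n traj u < n)%nat.
Proof.
  intros Hn. unfold argminD.
  destruct (argmin_in (fun s => Dmax n traj s u) 0%nat (seq 0 n)) as [->|H]; [lia|].
  apply in_seq in H; lia.
Qed.

Lemma Dmin_le (n : nat) (traj : nat -> R -> R) (u : R) (sigma : nat) :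
  (sigma < n)%nat -> Dmin n traj u <= Dmax n traj sigma u.
Proof.
  intros Hs. apply (argmin_le (fun s => Dmax n traj s u)). apply in_seq; lia.
Qed.

Lemma Dmax_Lipschitz (n : nat) (traj : nat -> R -> R) (a b M : R) (sigma : nat) :
  0 <= M -> (sigma < n)%nat ->
  (forall s, (s < n)%nat -> Lipschitz_on (traj s) a b M) ->
  Lipschitz_on (Dmax n traj sigma) a b (2 * M).
Proof.
  intros HM Hs HL u u' Hu Hu'. apply fold_Rmax_dist.
  { assert (Hd := Rabs_pos (u - u')). nra. }
  intros p Hp. apply in_seq in Hp.
  assert (H1 := HL sigma Hs u u' Hu Hu'). assert (H2 := HL p ltac:(lia) u u' Hu Hu').
  replace (2 * M * Rabs (u - u')) with (2 * (M * Rabs (u - u'))) by ring.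
  revert H1 H2. generalize (M * Rabs (u - u')). intros r.
  unfold Rabs; repeat destruct Rcase_abs; intros; lra.
Qed.

Lemma Dmin_Lipschitz (n : nat) (traj : nat -> R -> R) (a b M : R) :
  0 <= M -> (1 <= n)%nat ->
  (forall s, (s < n)%nat -> Lipschitz_on (traj s) a b M) ->
  Lipschitz_on (Dmin n traj) a b (2 * M).
Proof.
  intros HM Hn HL u u' Hu Hu'.
  assert (Hs := argminD_lt n traj u Hn). assert (Hs' := argminD_lt n traj u' Hn).
  assert (H1 := Dmin_le n traj u _ Hs'). assert (H2 := Dmin_le n traj u' _ Hs).
  assert (H3 := Dmax_Lipschitz n traj a b M _ HM Hs HL u u' Hu Hu').
  assert (H4 := Dmax_Lipschitz n traj a b M _ HM Hs' HL u u' Hu Hu').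
  unfold Dmin in *. revert H1 H2 H3 H4.
  generalize (2 * M * Rabs (u - u')). intros r.
  unfold Rabs; repeat destruct Rcase_abs; intros; lra.
Qed.

Lemma Dmax_extremes (n : nat) (traj : nat -> R -> R) (u : R) (top bot sigma : nat) :
  (top < n)%nat -> (bot < n)%nat ->
  (forall p, (p < n)%nat -> traj bot u <= traj p u <= traj top u) ->
  Dmax n traj sigma u =
    (traj top u - traj bot u) / 2
    + Rabs (traj sigma u - (traj top u + traj bot u) / 2).
Proof.
  intros Htop Hbot Hrange.
  assert (HLU := Hrange bot Hbot).
  transitivity (Rmax (Rabs (traj sigma u - traj top u)) (Rabs (traj sigma u - traj bot u))).
  - apply Rle_antisym.
    + apply fold_Rmax_lub; [apply (Rle_trans _ _ _ (Rabs_pos _) (Rmax_l _ _))|].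
      intros p Hp. apply in_seq in Hp. assert (Hr := Hrange p ltac:(lia)).
      revert Hr HLU. generalize (traj p u) (traj sigma u) (traj top u) (traj bot u).
      intros y x U L. unfold Rmax, Rabs; destruct Rle_dec; repeat destruct Rcase_abs; lra.
    + apply Rmax_lub; apply (fold_Rmax_ge (fun p => Rabs (traj sigma u - traj p u)));
        apply in_seq; lia.
  - revert HLU. generalize (traj sigma u) (traj top u) (traj bot u).
    intros x U L. unfold Rmax, Rabs; destruct Rle_dec; repeat destruct Rcase_abs; lra.
Qed.

Lemma unique_minimiser_closest_to_centre (n : nat) (traj : nat -> R -> R) (u : R)
  (top bot a : nat) :
  (top < n)%nat -> (bot < n)%nat -> (a < n)%nat ->
  (forall p, (p < n)%nat -> traj bot u <= traj p u <= traj top u) ->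
  (forall sigma, (sigma < n)%nat -> sigma <> a ->
     Rabs (traj a u - (traj top u + traj bot u) / 2)
     < Rabs (traj sigma u - (traj top u + traj bot u) / 2)) ->
  unique_minimiser n traj u a.
Proof.
  intros Htop Hbot Ha Hrange Hclose. split; [exact Ha|]. intros sigma Hs Hne.
  rewrite !(Dmax_extremes n traj u top bot) by assumption.
  apply Rplus_lt_compat_l, Hclose; assumption.
Qed.

Lemma piece_containing (s : nat -> R) (m : nat) (u : R) :
  s 0%nat <= u < s m -> exists i, (i < m)%nat /\ s i <= u < s (S i).
Proof.
  intros [H0 H1]. induction m as [|m IH]; [lra|].
  destruct (Rlt_dec u (s m)) as [h|h].
  - destruct (IH h) as [i [Hi Hu]]. exists i; split; [lia | exact Hu].
  - exists m; split; [lia | lra].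
Qed.

Lemma pieces_ge_samples (s : nat -> R) (m : nat) (ent : nat -> nat)
  (q : nat -> R) (a : nat -> nat) (K : nat) :
  (forall i, (i < m)%nat -> s i < s (S i)) ->
  (forall j, (j < K)%nat -> s 0%nat <= q j < s m) ->
  (forall j, (S j < K)%nat -> q j < q (S j) /\ a j <> a (S j)) ->
  (forall j i, (j < K)%nat -> (i < m)%nat -> s i <= q j <= s (S i) -> ent i = a j) ->
  (K <= m)%nat.
Proof.
  intros Hs Hq Hstep Hent.
  assert (Hmono := increasing_le m s Hs).
  destruct K as [|K]; [lia|].
  assert (Hidx : forall j, (j <= K)%nat ->
            exists i, ((i < m)%nat /\ s i <= q j < s (S i)) /\ (j <= i)%nat).
  { induction j as [|j IH]; intros Hj.
    - destruct (piece_containing s m (q 0%nat) (Hq 0%nat ltac:(lia))) as [i Hi].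
      exists i; split; [exact Hi | lia].
    - destruct (IH ltac:(lia)) as [i [[Hi Hqi] Hji]].
      destruct (piece_containing s m (q (S j)) (Hq (S j) ltac:(lia))) as [i' [Hi' Hqi']].
      destruct (Hstep j ltac:(lia)) as [Hlt Hne].
      exists i'; split; [tauto|].
      assert (Hle : (i <= i')%nat).
      { destruct (Nat.le_gt_cases i i') as [|Hgt]; [assumption|].
        assert (s (S i') <= s i) by (apply Hmono; lia). lra. }
      assert (i <> i').
      { intros <-. apply Hne.
        rewrite <- (Hent j i), <- (Hent (S j) i); try lia; lra. }
      lia. }
  destruct (Hidx K ltac:(lia)) as [i [[Hi _] HK]]. lia.
Qed.

Definition all_close (eps : R) (n : nat) (traj : nat -> R -> R) (a b : R) : Prop :=
  forall s p u, (s < n)%nat -> (p < n)%nat -> a <= u <= b ->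
    Rabs (traj s u - traj p u) <= eps.

Section CentralTrajectories.

Variables (n tau : nat) (eps : R) (t : nat -> R) (traj : nat -> R -> R).
Hypothesis n_pos : (1 <= n)%nat.
Hypothesis tau_pos : (1 <= tau)%nat.
Hypothesis traj_pl : piecewise_linear n tau t traj.
Hypothesis traj_close : all_close eps n traj (t 0%nat) (t tau).

Local Notation t0 := (t 0%nat).
Local Notation t1 := (t tau).

Lemma time_span : t0 < t1.
Proof.
  destruct traj_pl as [Ht _].
  apply Rlt_le_trans with (t 1%nat); [apply Ht; lia|].
  apply (increasing_le tau); auto; lia.
Qed.

Lemma trajectoid_lt (T : R -> nat) (u : R) :
  trajectoid eps n traj t0 t1 T -> t0 <= u <= t1 -> (T u < n)%nat.
Proof. intros [H _] Hu; auto. Qed.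

(* Every switch is allowed, since all entities are always eps-close. *)
Lemma argminD_trajectoid : trajectoid eps n traj t0 t1 (argminD n traj).
Proof.
  split; [intros; apply argminD_lt, n_pos|].
  intros u s p Hu Hs Hp.
  destruct (Hs 1 ltac:(lra)) as [x [Hx [_ <-]]].
  destruct (Hp 1 ltac:(lra)) as [y [Hy [_ <-]]].
  apply rt_step. repeat split; try apply argminD_lt, n_pos.
  apply traj_close; auto; apply argminD_lt, n_pos.
Qed.

Lemma ex_RInt_Dmin : ex_RInt (Dmin n traj) t0 t1.
Proof.
  destruct (piecewise_linear_Lipschitz n tau t traj traj_pl) as [M [HM HL]].
  assert (Hspan := time_span).
  apply (Lipschitz_on_ex_RInt _ _ _ (2 * M)); [lra | lra |].
  apply Dmin_Lipschitz; auto.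
Qed.

Lemma argminD_central : central eps n traj t0 t1 (argminD n traj).
Proof.
  split; [exact argminD_trajectoid|].
  exists (ex_RInt_Reals_0 _ _ _ ex_RInt_Dmin).
  intros T' HT' pr'. apply RiemannInt_P19; [left; exact time_span|].
  intros x Hx. apply Dmin_le, (trajectoid_lt T'); auto; lra.
Qed.

(* Otherwise, by continuity, T exceeds the pointwise minimum on a whole interval,
   and the integral of [argminD] would be strictly smaller. *)
Lemma central_on_piece (T : R -> nat) (e : nat) (a b u0 : R) :
  central eps n traj t0 t1 T -> (e < n)%nat -> t0 <= a -> a < b -> b <= t1 ->
  (forall u, a < u < b -> T u = e) -> a <= u0 <= b ->
  Dmax n traj e u0 = Dmin n traj u0.
Proof.
  intros [HT [pr Hpr]] He Ha Hab Hb HTe Hu0.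
  destruct (piecewise_linear_Lipschitz n tau t traj traj_pl) as [M [HM HL]].
  destruct (Req_dec (Dmax n traj e u0) (Dmin n traj u0)) as [|Hne]; [assumption|].
  exfalso.
  assert (Hle := Dmin_le n traj u0 e He).
  set (h := fun u => Dmax n traj e u - Dmin n traj u).
  assert (Hh : Lipschitz_on h a b (2 * M + 2 * M)).
  { intros x y Hx Hy.
    apply Lipschitz_on_minus with (a := t0) (b := t1); try lra;
      [apply Dmax_Lipschitz | apply Dmin_Lipschitz]; auto. }
  destruct (Lipschitz_positive_near h a b (2 * M + 2 * M) u0 ltac:(lra) Hab Hu0
              ltac:(unfold h; lra) Hh) as [a' [b' [Ha' [Hb' Hgap]]]].
  assert (Hint := RInt_le_gap (fun u => Dmax n traj (T u) u) (Dmin n traj)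
                    t0 t1 a' b' (h u0 / 2) ltac:(lra) ltac:(lra) ltac:(lra)
                    (ex_RInt_Reals_1 _ _ _ pr) ex_RInt_Dmin).
  assert (Hmin := Hpr _ argminD_trajectoid (ex_RInt_Reals_0 _ _ _ ex_RInt_Dmin)).
  rewrite <- !RInt_Reals in Hmin.
  assert (0 < h u0 / 2 * (b' - a')) by (apply Rmult_lt_0_compat; unfold h; lra).
  enough (RInt (Dmin n traj) t0 t1 + h u0 / 2 * (b' - a')
            <= RInt (fun u => Dmax n traj (T u) u) t0 t1) by (unfold Dmin in *; lra).
  apply Hint.
  - intros x Hx. apply Dmin_le, (trajectoid_lt T); auto; lra.
  - intros x Hx. rewrite HTe by lra. assert (Hg := Hgap x Hx). unfold h in *; lra.
Qed.

Lemma central_complexity_ge_samples (T : R -> nat) (q : nat -> R) (a : nat -> nat)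
  (K : nat) :
  central eps n traj t0 t1 T ->
  (forall j, (j < K)%nat -> t0 <= q j < t1) ->
  (forall j, (S j < K)%nat -> q j < q (S j) /\ a j <> a (S j)) ->
  (forall j, (j < K)%nat -> unique_minimiser n traj (q j) (a j)) ->
  complexity_ge traj t0 t1 T (INR K).
Proof.
  intros HC Hq Hstep Huniq m s ent Hs0 Hsm Hs HT _.
  apply le_INR, (pieces_ge_samples s m ent q a K Hs); [rewrite Hs0, Hsm; exact Hq | exact Hstep |].
  intros j i Hj Hi Hqi.
  assert (Hmono := increasing_le m s Hs).
  assert (Hsi : t0 <= s i) by (rewrite <- Hs0; apply Hmono; lia).
  assert (Hsi1 : s (S i) <= t1) by (rewrite <- Hsm; apply Hmono; lia).
  assert (Hlt := Hs i Hi).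
  assert (He : (ent i < n)%nat).
  { rewrite <- (HT i Hi ((s i + s (S i)) / 2)) by lra.
    apply (trajectoid_lt T); [apply HC | lra]. }
  assert (Hpiece := central_on_piece T (ent i) (s i) (s (S i)) (q j) HC He Hsi Hlt Hsi1
                      (HT i Hi) Hqi).
  destruct (Huniq j Hj) as [Ha Hmin].
  destruct (Nat.eq_dec (ent i) (a j)) as [|Hne]; [assumption|].
  exfalso. assert (Hlt' := Hmin (ent i) He Hne).
  assert (Hle := Dmin_le n traj (q j) (a j) Ha). lra.
Qed.

End CentralTrajectories.

Lemma complexity_ge_weaken (traj : nat -> R -> R) (a b : R) (T : R -> nat) (x y : R) :
  x <= y -> complexity_ge traj a b T y -> complexity_ge traj a b T x.
Proof.
  intros Hxy H m s ent H0 Hm Hs HT Hlin.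
  eapply Rle_trans; [exact Hxy | apply (H m s ent); assumption].
Qed.

Lemma all_close_of_bound (n : nat) (traj : nat -> R -> R) (a b B : R) :
  (forall s u, (s < n)%nat -> Rabs (traj s u) <= B) -> all_close (2 * B) n traj a b.
Proof.
  intros H s p u Hs Hp _.
  assert (H1 := H s u Hs). assert (H2 := H p u Hp). revert H1 H2.
  unfold Rabs; repeat destruct Rcase_abs; intros; lra.
Qed.

Definition zigzag (u : R) : R := asin (sin u).

Definition slab_time (k : nat) : R := - (PI / 2) + INR k * PI.

Lemma pow_m1_even (k : nat) : (-1) ^ k = if Nat.even k then 1 else -1.
Proof.
  induction k as [|k IH]; [reflexivity|].
  rewrite <- tech_pow_Rmult, IH, Nat.even_succ, <- Nat.negb_even.
  destruct (Nat.even k); simpl; ring.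
Qed.

Lemma sin_shift (k : nat) (x : R) : sin (x + INR k * PI) = (-1) ^ k * sin x.
Proof.
  induction k as [|k IH].
  - simpl. rewrite Rmult_0_l, Rplus_0_r; ring.
  - rewrite S_INR. replace (x + (INR k + 1) * PI) with ((x + INR k * PI) + PI) by ring.
    rewrite neg_sin, IH. simpl; ring.
Qed.

Lemma zigzag_on_slab (k : nat) (u : R) :
  slab_time k <= u <= slab_time (S k) -> zigzag u = (-1) ^ k * (u - INR k * PI).
Proof.
  unfold slab_time; rewrite S_INR; intros Hu. unfold zigzag.
  replace u with ((u - INR k * PI) + INR k * PI) at 1 by ring.
  rewrite sin_shift, pow_m1_even. destruct (Nat.even k).
  - rewrite Rmult_1_l, asin_sin by lra. ring.
  - replace (-1 * sin (u - INR k * PI)) with (- sin (u - INR k * PI)) by ring.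
    rewrite asin_opp, asin_sin by lra. ring.
Qed.

Lemma zigzag_bound (u : R) : - (PI / 2) <= zigzag u <= PI / 2.
Proof. apply asin_bound. Qed.

Lemma piecewise_linear_zigzag (n tau : nat) (traj : nat -> R -> R) :
  (forall s, exists p q, forall u, traj s u = p * zigzag u + q) ->
  piecewise_linear n tau slab_time traj.
Proof.
  intros H. split.
  - intros k _. unfold slab_time. rewrite S_INR. assert (Hpi := PI_RGT_0). lra.
  - intros s k _ _. destruct (H s) as [p [q Hpq]].
    exists (p * (-1) ^ k), (q - p * (-1) ^ k * INR k * PI). intros u Hu.
    rewrite Hpq, (zigzag_on_slab k u Hu). ring.
Qed.

(* At time [slab_time j + 3 PI / 4] the entity on the positive side is the one
   closest to the centre, so the unique minimiser of D alternates between 0 and 1. *)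
Definition small_traj (s : nat) (u : R) : R :=
  if (s =? 0)%nat then zigzag u else if (s =? 1)%nat then - zigzag u else 2.

Lemma small_traj_piecewise_linear (n tau : nat) :
  piecewise_linear n tau slab_time small_traj.
Proof.
  apply piecewise_linear_zigzag. intros s. unfold small_traj.
  destruct (s =? 0)%nat; [exists 1, 0; intros; ring|].
  destruct (s =? 1)%nat; [exists (-1), 0; intros; ring | exists 0, 2; intros; ring].
Qed.

Lemma small_traj_all_close (n : nat) (a b : R) : all_close 4 n small_traj a b.
Proof.
  assert (Hpi4 := PI_4). replace 4 with (2 * 2) by ring. apply all_close_of_bound.
  intros s u _. assert (Hz := zigzag_bound u). unfold small_traj.
  destruct (s =? 0)%nat; [|destruct (s =? 1)%nat]; unfold Rabs; destruct Rcase_abs; lra.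
Qed.

Lemma small_traj_unique_minimiser (n j : nat) : (3 <= n)%nat ->
  unique_minimiser n small_traj (slab_time j + 3 * PI / 4) (if Nat.even j then 0%nat else 1%nat).
Proof.
  intros Hn. assert (Hpi := PI2_3_2). assert (Hpi4 := PI_4).
  assert (Hz : zigzag (slab_time j + 3 * PI / 4) = (-1) ^ j * (PI / 4)).
  { rewrite (zigzag_on_slab j) by (unfold slab_time; rewrite S_INR; lra).
    unfold slab_time. f_equal. field. }
  rewrite pow_m1_even in Hz.
  set (u := slab_time j + 3 * PI / 4) in *.
  destruct (Nat.even j); simpl in Hz.
  - apply (unique_minimiser_closest_to_centre n small_traj u 2 1 0); try lia.
    + intros p _. unfold small_traj. rewrite Hz. destruct p as [|[|p]]; simpl; lra.
    + intros p _ Hne. unfold small_traj. rewrite Hz.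
      destruct p as [|[|p]]; simpl; [lia | |]; unfold Rabs; repeat destruct Rcase_abs; lra.
  - apply (unique_minimiser_closest_to_centre n small_traj u 2 0 1); try lia.
    + intros p _. unfold small_traj. rewrite Hz. destruct p as [|[|p]]; simpl; lra.
    + intros p _ Hne. unfold small_traj. rewrite Hz.
      destruct p as [|[|p]]; simpl; [| lia |]; unfold Rabs; repeat destruct Rcase_abs; lra.
Qed.

Definition height (k : nat) : R := INR k ^ 2 + 1.

Definition half_point (k s : nat) : R := INR s - INR k - 1 / 2.

Definition depth (k s : nat) : R := (INR s - 2 * INR k) / (4 * INR k + 2).

(* For [v] in [[0, k]], entities [s <= k] are the tangents at the integers to
   [height k + v^2], entities [k < s <= 2k] the tangents at the half-integers to
   [- height k - v^2], so the extreme positions are [height k + v^2 - x^2] and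
   [- height k - v^2 + (1/2 - x)^2], where [x] is the distance from [v] to the integers.
   Their centre [1/8 - x/2] sweeps back and forth across the stationary entities
   [2k < s <= 4k], which sit at the centre exactly when [x = depth k s]. *)
Definition position (k s : nat) (v : R) : R :=
  if (s <=? k)%nat then height k + v ^ 2 - (v - INR s) ^ 2
  else if (s <=? 2 * k)%nat then - height k - v ^ 2 + (v - half_point k s) ^ 2
  else if (s <=? 4 * k)%nat then 1 / 8 - depth k s / 2
  else height k.

Definition sweep (k : nat) (u : R) : R := (zigzag u + PI / 2) * INR k / PI.

Definition big_traj (k s : nat) (u : R) : R := position k s (sweep k u).

Lemma position_upper (k s : nat) (v : R) :
  (s <= k)%nat -> position k s v = height k + v ^ 2 - (v - INR s) ^ 2.
Proof. intros; unfold position; destruct (Nat.leb_spec s k); [reflexivity | lia]. Qed.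

Lemma position_lower (k s : nat) (v : R) :
  (k < s <= 2 * k)%nat -> position k s v = - height k - v ^ 2 + (v - half_point k s) ^ 2.
Proof.
  intros; unfold position; destruct (Nat.leb_spec s k), (Nat.leb_spec s (2 * k));
    [lia | lia | reflexivity | lia].
Qed.

Lemma position_middle (k s : nat) (v : R) :
  (2 * k < s <= 4 * k)%nat -> position k s v = 1 / 8 - depth k s / 2.
Proof.
  intros; unfold position; destruct (Nat.leb_spec s k), (Nat.leb_spec s (2 * k)),
    (Nat.leb_spec s (4 * k)); solve [lia | reflexivity].
Qed.

Lemma position_parked (k s : nat) (v : R) : (4 * k < s)%nat -> position k s v = height k.
Proof.
  intros; unfold position; destruct (Nat.leb_spec s k), (Nat.leb_spec s (2 * k)),
    (Nat.leb_spec s (4 * k)); solve [lia | reflexivity].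
Qed.

Lemma position_affine (k s : nat) : exists A B, forall v, position k s v = A * v + B.
Proof.
  unfold position. destruct (s <=? k)%nat.
  { exists (2 * INR s), (height k - INR s ^ 2); intros; ring. }
  destruct (s <=? 2 * k)%nat.
  { exists (-2 * half_point k s), (- height k + half_point k s ^ 2); intros; ring. }
  destruct (s <=? 4 * k)%nat; [exists 0, (1 / 8 - depth k s / 2) | exists 0, (height k)];
    intros; ring.
Qed.

Lemma sweep_range (k : nat) (u : R) : 0 <= sweep k u <= INR k.
Proof.
  unfold sweep. assert (Hz := zigzag_bound u). assert (Hpi := PI_RGT_0).
  assert (Hk := pos_INR k).
  replace ((zigzag u + PI / 2) * INR k / PI) with ((zigzag u + PI / 2) / PI * INR k)
    by (field; lra).
  assert (0 <= (zigzag u + PI / 2) / PI <= 1).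
  { split; [apply Rmult_le_pos; [lra | left; apply Rinv_0_lt_compat; lra]|].
    apply Rmult_le_reg_r with PI; [lra|]. unfold Rdiv.
    rewrite Rmult_assoc, Rinv_l by lra. lra. }
  nra.
Qed.

Lemma depth_range (k s : nat) : (2 * k < s <= 4 * k)%nat -> 0 < depth k s < 1 / 2.
Proof.
  intros Hs. unfold depth. assert (Hk := pos_INR k).
  assert (H1 : 2 * INR k + 1 <= INR s) by
    (replace (2 * INR k + 1) with (INR (2 * k + 1)) by (rewrite plus_INR, mult_INR; simpl; ring);
     apply le_INR; lia).
  assert (H2 : INR s <= 4 * INR k) by
    (replace (4 * INR k) with (INR (4 * k)) by (rewrite mult_INR; simpl; ring); apply le_INR; lia).
  split; [apply Rdiv_lt_0_compat; lra|].
  apply Rmult_lt_reg_r with (4 * INR k + 2); [lra|]. unfold Rdiv.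
  rewrite Rmult_assoc, Rinv_l by lra. lra.
Qed.

Lemma depth_injective (k s s' : nat) : depth k s = depth k s' -> s = s'.
Proof.
  unfold depth. assert (Hk := pos_INR k). intros E. apply INR_eq.
  apply (Rmult_eq_compat_r (4 * INR k + 2)) in E.
  unfold Rdiv in E. rewrite !Rmult_assoc, !Rinv_l in E by lra. lra.
Qed.

Lemma INR_dist_ge_1 (a b : nat) : a <> b -> 1 <= Rabs (INR a - INR b).
Proof.
  intros H. destruct (Nat.lt_total a b) as [h|[h|h]]; [| contradiction |].
  - assert (INR (S a) <= INR b) by (apply le_INR; lia). rewrite S_INR in *.
    unfold Rabs; destruct Rcase_abs; lra.
  - assert (INR (S b) <= INR a) by (apply le_INR; lia). rewrite S_INR in *.
    unfold Rabs; destruct Rcase_abs; lra.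
Qed.

Lemma sq_dist_nearest_nat (x d : R) (st s : nat) :
  Rabs (x - INR st) = d -> d <= 1 / 2 -> d ^ 2 <= (x - INR s) ^ 2.
Proof.
  intros Hst Hd. assert (Hd0 : 0 <= d) by (rewrite <- Hst; apply Rabs_pos).
  rewrite <- (pow2_abs (x - INR s)). apply pow_incr. split; [exact Hd0|].
  destruct (Nat.eq_dec s st) as [->|Hne]; [lra|].
  assert (H1 := INR_dist_ge_1 s st Hne). revert H1 Hst.
  unfold Rabs; repeat destruct Rcase_abs; intros; lra.
Qed.

Lemma position_bound (k s : nat) (v : R) :
  0 <= v <= INR k -> Rabs (position k s v) <= height k + INR k ^ 2.
Proof.
  intros Hv. assert (Hk := pos_INR k). unfold height.
  destruct (le_lt_dec s k) as [h1|h1]; [|destruct (le_lt_dec s (2 * k)) as [h2|h2];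
    [|destruct (le_lt_dec s (4 * k)) as [h3|h3]]].
  - rewrite position_upper by lia. unfold height.
    assert (INR s <= INR k) by (apply le_INR; lia). assert (Hs := pos_INR s).
    assert ((v - INR s) ^ 2 <= INR k ^ 2) by nra.
    assert (0 <= v ^ 2 <= INR k ^ 2) by nra. assert (Hsq := pow2_ge_0 (v - INR s)).
    unfold Rabs; destruct Rcase_abs; lra.
  - rewrite position_lower by lia. unfold height, half_point.
    assert (INR (S k) <= INR s) by (apply le_INR; lia).
    assert (INR s <= INR (2 * k)) by (apply le_INR; lia).
    rewrite S_INR in *; rewrite mult_INR in *; simpl in *.
    assert ((v - (INR s - INR k - 1 / 2)) ^ 2 <= INR k ^ 2) by nra.
    assert (0 <= v ^ 2 <= INR k ^ 2) by nra.
    assert (Hsq := pow2_ge_0 (v - (INR s - INR k - 1 / 2))).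
    unfold Rabs; destruct Rcase_abs; lra.
  - rewrite position_middle by lia. assert (Hd := depth_range k s ltac:(lia)).
    assert (0 <= INR k ^ 2) by nra. unfold Rabs; destruct Rcase_abs; lra.
  - rewrite position_parked by lia. unfold height.
    assert (0 <= INR k ^ 2) by nra. unfold Rabs; destruct Rcase_abs; lra.
Qed.

Lemma position_upper_ge_1 (k s : nat) (v : R) :
  0 <= v <= INR k -> (s <= k)%nat -> 1 <= position k s v.
Proof.
  intros Hv Hs. rewrite position_upper by lia. unfold height.
  assert (INR s <= INR k) by (apply le_INR; lia). assert (Hs0 := pos_INR s).
  assert ((v - INR s) ^ 2 <= INR k ^ 2) by nra. nra.
Qed.

Lemma position_lower_le_m1 (k s : nat) (v : R) :
  0 <= v <= INR k -> (k < s <= 2 * k)%nat -> position k s v <= -1.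
Proof.
  intros Hv Hs. rewrite position_lower by lia. unfold height, half_point.
  assert (INR (S k) <= INR s) by (apply le_INR; lia).
  assert (INR s <= INR (2 * k)) by (apply le_INR; lia).
  rewrite S_INR in *; rewrite mult_INR in *; simpl in *.
  assert ((v - (INR s - INR k - 1 / 2)) ^ 2 <= INR k ^ 2) by nra. nra.
Qed.

Definition depth_point (k : nat) (d v : R) : Prop :=
  exists j, (j < k)%nat /\ (v = INR j + d \/ v = INR j + 1 - d).

Lemma depth_point_reflect (k : nat) (d v : R) :
  depth_point k d v -> depth_point k d (INR k - v).
Proof.
  intros [j [Hj Hv]]. exists (k - 1 - j)%nat. split; [lia|].
  rewrite !minus_INR by lia. simpl. destruct Hv as [->| ->]; [right | left]; ring.
Qed.

Lemma depth_point_nearest (k : nat) (d v : R) :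
  0 < d < 1 / 2 -> depth_point k d v ->
  exists st sb, (st <= k)%nat /\ (k < sb <= 2 * k)%nat /\
    Rabs (v - INR st) = d /\ Rabs (v - half_point k sb) = 1 / 2 - d.
Proof.
  intros Hd [j [Hj Hv]]. assert (Hj0 := pos_INR j).
  exists (if Rle_dec v (INR j + 1 / 2) then j else S j), (k + 1 + j)%nat.
  split; [destruct Rle_dec; lia | split; [lia | split]].
  - destruct Rle_dec; rewrite ?S_INR; unfold Rabs; destruct Rcase_abs; lra.
  - unfold half_point. rewrite !plus_INR. simpl. unfold Rabs; destruct Rcase_abs; lra.
Qed.

Lemma position_at_nearest_nat (k st : nat) (d v : R) :
  (st <= k)%nat -> Rabs (v - INR st) = d -> position k st v = height k + v ^ 2 - d ^ 2.
Proof.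
  intros Hst Ed. rewrite position_upper by exact Hst.
  rewrite <- (pow2_abs (v - INR st)), Ed. reflexivity.
Qed.

Lemma position_at_nearest_half_point (k sb : nat) (d v : R) :
  (k < sb <= 2 * k)%nat -> Rabs (v - half_point k sb) = 1 / 2 - d ->
  position k sb v = - height k - v ^ 2 + (1 / 2 - d) ^ 2.
Proof.
  intros Hsb Ed. rewrite position_lower by exact Hsb.
  rewrite <- (pow2_abs (v - half_point k sb)), Ed. reflexivity.
Qed.

Lemma position_between_extremes (k st sb p : nat) (d v : R) :
  0 <= v <= INR k -> 0 < d < 1 / 2 -> (st <= k)%nat -> (k < sb <= 2 * k)%nat ->
  Rabs (v - INR st) = d -> Rabs (v - half_point k sb) = 1 / 2 - d ->
  position k sb v <= position k p v <= position k st v.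
Proof.
  intros Hv Hd Hst Hsb Ed Ehp.
  assert (Hup : forall s, d ^ 2 <= (v - INR s) ^ 2)
    by (intros; apply (sq_dist_nearest_nat v d st); [exact Ed | lra]).
  assert (Hlow : forall s, (1 / 2 - d) ^ 2 <= (v - half_point k s) ^ 2).
  { intros s. unfold half_point.
    replace (v - (INR s - INR k - 1 / 2)) with ((v + INR k + 1 / 2) - INR s) by ring.
    apply (sq_dist_nearest_nat _ _ sb); [|lra].
    rewrite <- Ehp. unfold half_point. f_equal. ring. }
  rewrite (position_at_nearest_nat k st d v Hst Ed),
    (position_at_nearest_half_point k sb d v Hsb Ehp).
  assert (Hv0 := Hup 0%nat). simpl INR in Hv0.
  assert (Hk := pos_INR k). assert (Hh : 1 <= height k) by (unfold height; nra).
  destruct (le_lt_dec p k) as [h1|h1];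
    [|destruct (le_lt_dec p (2 * k)) as [h2|h2];
      [|destruct (le_lt_dec p (4 * k)) as [h3|h3]]].
  - assert (Hb := position_upper_ge_1 k p v Hv h1). assert (Hu := Hup p).
    rewrite (position_upper k p) in Hb |- * by lia. nra.
  - assert (Hb := position_lower_le_m1 k p v Hv ltac:(lia)). assert (Hl := Hlow p).
    rewrite (position_lower k p) in Hb |- * by lia. nra.
  - rewrite position_middle by lia. assert (Hdp := depth_range k p ltac:(lia)). nra.
  - rewrite position_parked by lia. nra.
Qed.

Lemma depth_point_unique_minimiser (n k s0 : nat) (u : R) :
  (4 * k < n)%nat -> (2 * k < s0 <= 4 * k)%nat ->
  depth_point k (depth k s0) (sweep k u) -> unique_minimiser n (big_traj k) u s0.
Proof.
  intros Hn Hs0 Hpoint.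
  assert (Hd := depth_range k s0 Hs0). assert (Hvr := sweep_range k u).
  destruct (depth_point_nearest k _ _ Hd Hpoint) as [st [sb [Hst [Hsb [Ed Ehp]]]]].
  unfold big_traj. set (v := sweep k u) in *. set (d := depth k s0) in *.
  assert (Hcentre : position k s0 v = (position k st v + position k sb v) / 2).
  { rewrite (position_at_nearest_nat k st d v Hst Ed),
      (position_at_nearest_half_point k sb d v Hsb Ehp), position_middle by lia.
    fold d; field. }
  assert (Hband : Rabs (position k s0 v) < 1 / 8)
    by (rewrite position_middle by lia; fold d; unfold Rabs; destruct Rcase_abs; lra).
  apply (unique_minimiser_closest_to_centre n _ u st sb s0); try lia; fold v.
  - intros p _. apply (position_between_extremes k st sb p d); assumption.
  - intros s _ Hne. rewrite <- Hcentre, Rminus_diag, Rabs_R0.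
    apply Rabs_pos_lt. intros E.
    assert (Hc : Rabs (position k s v) < 1 / 8)
      by (replace (position k s v) with (position k s0 v) by lra; exact Hband).
    destruct (le_lt_dec s k) as [h1|h1];
      [|destruct (le_lt_dec s (2 * k)) as [h2|h2];
        [|destruct (le_lt_dec s (4 * k)) as [h3|h3]]].
    + assert (Hb := position_upper_ge_1 k s v Hvr h1).
      revert Hc; unfold Rabs; destruct Rcase_abs; lra.
    + assert (Hb := position_lower_le_m1 k s v Hvr ltac:(lia)).
      revert Hc; unfold Rabs; destruct Rcase_abs; lra.
    + rewrite !position_middle in E by lia. apply Hne, (depth_injective k). lra.
    + rewrite position_parked in Hc by lia. assert (Hk := pos_INR k).
      revert Hc; unfold height, Rabs; destruct Rcase_abs; nra.
Qed.

Definition sample_offset (k r : nat) : R := (2 * INR r + 1) / (2 * INR k + 1).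

(* [G] counts half-units of the sweep, each carrying [k] samples; [sample_entity k G r]
   has the parity opposite to [G], so consecutive samples never share an entity. *)
Definition sample_time (k G r : nat) : R :=
  slab_time 0 + (INR G + sample_offset k r) * PI / (2 * INR k).

Definition sample_entity (k G r : nat) : nat :=
  if Nat.even G then (2 * k + 1 + 2 * r)%nat else (4 * k - 2 * r)%nat.

Lemma sample_offset_range (k r : nat) : (r < k)%nat -> 0 < sample_offset k r < 1.
Proof.
  intros Hr. unfold sample_offset.
  assert (INR r + 1 <= INR k) by (rewrite <- S_INR; apply le_INR; lia).
  assert (Hr0 := pos_INR r). split; [apply Rdiv_lt_0_compat; lra|].
  apply Rmult_lt_reg_r with (2 * INR k + 1); [lra|]. unfold Rdiv.
  rewrite Rmult_assoc, Rinv_l by lra. lra.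
Qed.

Lemma sample_offset_succ (k r : nat) : sample_offset k r < sample_offset k (S r).
Proof.
  unfold sample_offset. rewrite S_INR. assert (Hk := pos_INR k).
  unfold Rdiv. apply Rmult_lt_compat_r; [apply Rinv_0_lt_compat|]; lra.
Qed.

Lemma depth_sample_entity (k G r : nat) : (r < k)%nat ->
  depth k (sample_entity k G r) =
    if Nat.even G then sample_offset k r / 2 else (1 - sample_offset k r) / 2.
Proof.
  intros Hr. assert (Hk := pos_INR k). unfold depth, sample_offset, sample_entity.
  destruct (Nat.even G).
  - rewrite !plus_INR, !mult_INR. simpl. field. lra.
  - rewrite minus_INR, !mult_INR by lia. simpl. field. lra.
Qed.

Lemma sweep_on_slab (k S : nat) (theta : R) : 0 <= theta <= PI ->
  sweep k (slab_time S + theta) =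
    if Nat.even S then theta * INR k / PI else INR k - theta * INR k / PI.
Proof.
  intros Htheta. assert (Hpi := PI_RGT_0). unfold sweep.
  rewrite (zigzag_on_slab S) by (unfold slab_time; rewrite S_INR; lra).
  rewrite pow_m1_even. unfold slab_time. destruct (Nat.even S); field; lra.
Qed.

Lemma sample_depth_point (k G r : nat) : (1 <= k)%nat -> (r < k)%nat ->
  depth_point k (depth k (sample_entity k G r)) (sweep k (sample_time k G r)).
Proof.
  intros Hk Hr. assert (Hpi := PI_RGT_0).
  assert (HkR : 1 <= INR k) by (apply (le_INR 1); lia).
  assert (Hoff := sample_offset_range k r Hr).
  rewrite depth_sample_entity by exact Hr.
  assert (HG := Nat.div_mod G (2 * k) ltac:(lia)).
  assert (Hh := Nat.mod_upper_bound G (2 * k) ltac:(lia)).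
  set (S := (G / (2 * k))%nat) in *. set (h := (G mod (2 * k))%nat) in *.
  assert (Heven : Nat.even G = Nat.even h).
  { rewrite HG, Nat.even_add, <- Nat.mul_assoc, Nat.even_mul. simpl.
    destruct (Nat.even h); reflexivity. }
  assert (HhR : INR h + 1 <= 2 * INR k).
  { replace (2 * INR k) with (INR (2 * k)) by (rewrite mult_INR; reflexivity).
    rewrite <- S_INR; apply le_INR; lia. }
  set (theta := (INR h + sample_offset k r) * PI / (2 * INR k)).
  assert (Htime : sample_time k G r = slab_time S + theta).
  { unfold sample_time, theta, slab_time. rewrite HG at 1.
    rewrite plus_INR, !mult_INR. simpl. field. lra. }
  assert (Htheta : 0 <= theta <= PI).
  { assert (Hh0 := pos_INR h). unfold theta. split.
    - apply Rmult_le_pos; [apply Rmult_le_pos | left; apply Rinv_0_lt_compat]; lra.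
    - apply Rmult_le_reg_r with (2 * INR k); [lra|]. unfold Rdiv.
      rewrite Rmult_assoc, Rinv_l by lra. nra. }
  assert (Hw : theta * INR k / PI = (INR h + sample_offset k r) / 2)
    by (unfold theta; field; lra).
  rewrite Htime, sweep_on_slab by exact Htheta. rewrite Hw, Heven.
  enough (Hpoint : depth_point k (if Nat.even h then sample_offset k r / 2
                                  else (1 - sample_offset k r) / 2)
                     ((INR h + sample_offset k r) / 2))
    by (destruct (Nat.even S); [exact Hpoint | apply depth_point_reflect, Hpoint]).
  destruct (Nat.Even_or_Odd h) as [[j Hj] | [j Hj]].
  - assert (E : Nat.even h = true) by (rewrite Hj, Nat.even_mul; reflexivity).
    rewrite E. exists j. split; [lia|]. left.
    rewrite Hj, mult_INR. simpl. field.
  - assert (E : Nat.even h = false)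
      by (rewrite Hj, Nat.even_add, Nat.even_mul; reflexivity).
    rewrite E. exists j. split; [lia|]. right.
    rewrite Hj, plus_INR, mult_INR. simpl. field.
Qed.

Lemma succ_div_mod (k j : nat) : (0 < k)%nat ->
  (S j / k = j / k /\ S j mod k = S (j mod k))%nat \/
  (S j / k = S (j / k) /\ S j mod k = 0 /\ j mod k = k - 1)%nat.
Proof.
  intros Hk. assert (Hj := Nat.div_mod j k ltac:(lia)).
  assert (Hr := Nat.mod_upper_bound j k ltac:(lia)).
  destruct (Nat.eq_dec (S (j mod k)) k) as [Heq|Hne].
  - right. assert (E : S j = (k * S (j / k) + 0)%nat) by lia.
    rewrite <- (Nat.div_unique _ _ _ _ Hk E), <- (Nat.mod_unique _ _ _ _ Hk E). lia.
  - left. assert (E : S j = (k * (j / k) + S (j mod k))%nat) by lia.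
    assert (Hlt : (S (j mod k) < k)%nat) by lia.
    rewrite <- (Nat.div_unique _ _ _ _ Hlt E), <- (Nat.mod_unique _ _ _ _ Hlt E). lia.
Qed.

Definition big_sample (k j : nat) : R := sample_time k (j / k) (j mod k).

Definition big_label (k j : nat) : nat := sample_entity k (j / k) (j mod k).

Lemma big_sample_step (k j : nat) : (1 <= k)%nat ->
  big_sample k j < big_sample k (S j) /\ big_label k j <> big_label k (S j).
Proof.
  intros Hk. assert (Hpi := PI_RGT_0).
  assert (HkR : 1 <= INR k) by (apply (le_INR 1); lia).
  assert (Hr := Nat.mod_upper_bound j k ltac:(lia)).
  assert (Htime : forall G G' r r', INR G + sample_offset k r < INR G' + sample_offset k r' ->
            sample_time k G r < sample_time k G' r').
  { intros G G' r r' H. unfold sample_time. apply Rplus_lt_compat_l. unfold Rdiv.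
    apply Rmult_lt_compat_r; [apply Rinv_0_lt_compat; lra|].
    apply Rmult_lt_compat_r; lra. }
  unfold big_sample, big_label.
  destruct (succ_div_mod k j ltac:(lia)) as [[-> ->] | [-> [-> Hlast]]]; split.
  - apply Htime. assert (H := sample_offset_succ k (j mod k)). lra.
  - unfold sample_entity. destruct (Nat.even (j / k)); lia.
  - apply Htime. rewrite S_INR.
    assert (H1 := sample_offset_range k (j mod k) Hr).
    assert (H2 := sample_offset_range k 0 ltac:(lia)). lra.
  - unfold sample_entity. rewrite Nat.even_succ, <- Nat.negb_even.
    destruct (Nat.even (j / k)); simpl; lia.
Qed.

Lemma big_sample_range (k tau j : nat) : (1 <= k)%nat -> (j < 2 * k * tau * k)%nat ->
  slab_time 0 <= big_sample k j < slab_time tau.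
Proof.
  intros Hk Hj. assert (Hpi := PI_RGT_0).
  assert (HkR : 1 <= INR k) by (apply (le_INR 1); lia).
  assert (Hoff := sample_offset_range k (j mod k) (Nat.mod_upper_bound j k ltac:(lia))).
  assert (HG : (j / k < 2 * k * tau)%nat)
    by (apply Nat.Div0.div_lt_upper_bound; rewrite Nat.mul_comm; exact Hj).
  assert (HGR : INR (j / k) + 1 <= 2 * INR k * INR tau)
    by (replace (2 * INR k * INR tau) with (INR (2 * k * tau)) by (rewrite !mult_INR; simpl; ring);
        rewrite <- S_INR; apply le_INR; lia).
  assert (HG0 := pos_INR (j / k)).
  unfold big_sample, sample_time. set (w := INR (j / k) + sample_offset k (j mod k)).
  assert (Hw : 0 <= w < 2 * INR k * INR tau) by (unfold w; lra).
  split.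
  - assert (0 <= w * PI / (2 * INR k))
      by (apply Rmult_le_pos; [apply Rmult_le_pos | left; apply Rinv_0_lt_compat]; lra).
    lra.
  - assert (w * PI / (2 * INR k) < INR tau * PI).
    { apply Rmult_lt_reg_r with (2 * INR k); [lra|]. unfold Rdiv.
      rewrite Rmult_assoc, Rinv_l by lra. nra. }
    unfold slab_time. simpl INR. lra.
Qed.

Lemma small_design (n tau : nat) : (3 <= n)%nat -> (1 <= tau)%nat ->
  piecewise_linear n tau slab_time small_traj /\
  (exists T, central 4 n small_traj (slab_time 0) (slab_time tau) T) /\
  (forall T, central 4 n small_traj (slab_time 0) (slab_time tau) T ->
     complexity_ge small_traj (slab_time 0) (slab_time tau) T (INR tau)).
Proof.
  intros Hn Htau. assert (Hpi := PI_RGT_0).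
  assert (Hpl := small_traj_piecewise_linear n tau).
  assert (Hclose := small_traj_all_close n (slab_time 0) (slab_time tau)).
  split; [exact Hpl | split].
  - exists (argminD n small_traj). apply (argminD_central n tau); auto; lia.
  - intros T HT.
    apply (central_complexity_ge_samples n tau 4 slab_time small_traj) with
      (q := fun j => slab_time j + 3 * PI / 4)
      (a := fun j => if Nat.even j then 0%nat else 1%nat); auto; try lia.
    + intros j Hj. assert (INR j + 1 <= INR tau) by (rewrite <- S_INR; apply le_INR; lia).
      assert (Hj0 := pos_INR j). unfold slab_time. simpl INR. nra.
    + intros j _. split; [unfold slab_time; rewrite S_INR; lra|].
      rewrite Nat.even_succ, <- Nat.negb_even. destruct (Nat.even j); simpl; lia.
    + intros j _. apply small_traj_unique_minimiser; lia.
Qed.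

Lemma big_design (n tau k : nat) : (1 <= k)%nat -> (4 * k < n)%nat -> (1 <= tau)%nat ->
  let eps := 2 * (height k + INR k ^ 2) in
  piecewise_linear n tau slab_time (big_traj k) /\
  (exists T, central eps n (big_traj k) (slab_time 0) (slab_time tau) T) /\
  (forall T, central eps n (big_traj k) (slab_time 0) (slab_time tau) T ->
     complexity_ge (big_traj k) (slab_time 0) (slab_time tau) T (INR (2 * k * tau * k))).
Proof.
  intros Hk Hn Htau eps. assert (Hpi := PI_RGT_0).
  assert (Hpl : piecewise_linear n tau slab_time (big_traj k)).
  { apply piecewise_linear_zigzag. intros s.
    destruct (position_affine k s) as [A [B HAB]].
    exists (A * INR k / PI), (A * INR k / 2 + B). intros u.
    unfold big_traj, sweep. rewrite HAB. field. lra. }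
  assert (Hclose : all_close eps n (big_traj k) (slab_time 0) (slab_time tau))
    by (apply all_close_of_bound; intros s u _; apply position_bound, sweep_range).
  split; [exact Hpl | split].
  - exists (argminD n (big_traj k)). apply (argminD_central n tau); auto; lia.
  - intros T HT.
    apply (central_complexity_ge_samples n tau eps slab_time (big_traj k)) with
      (q := big_sample k) (a := big_label k); auto; try lia.
    + intros j Hj. apply big_sample_range; assumption.
    + intros j _. apply big_sample_step, Hk.
    + intros j _. assert (Hr := Nat.mod_upper_bound j k ltac:(lia)).
      apply depth_point_unique_minimiser; [exact Hn | |].
      * unfold big_label, sample_entity. destruct (Nat.even (j / k)); lia.
      * apply sample_depth_point; assumption.
Qed.

Lemma quarter_bounds (n : nat) :
  (4 < n)%nat -> (1 <= (n - 1) / 4 /\ 4 * ((n - 1) / 4) < n <= 8 * ((n - 1) / 4))%nat.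
Proof.
  intros Hn. assert (H := Nat.div_mod (n - 1) 4 ltac:(lia)).
  assert (Hr := Nat.mod_upper_bound (n - 1) 4 ltac:(lia)). lia.
Qed.

Lemma scaled_square_le (n m tau : nat) :
  (n * n <= 32 * m)%nat -> 1 / 32 * INR tau * INR n ^ 2 <= INR (tau * m).
Proof.
  intros H. apply le_INR in H. rewrite !mult_INR in *. simpl INR in H.
  assert (Htau := pos_INR tau). nra.
Qed.

Theorem mainTheorem3 :
  exists c : R, c > 0 /\
  forall n tau : nat, (3 <= n)%nat -> (1 <= tau)%nat ->
  exists eps : R, eps > 0 /\
  exists (t : nat -> R) (traj : nat -> R -> R),
    piecewise_linear n tau t traj /\
    (exists T, central eps n traj (t 0%nat) (t tau) T) /\
    (forall T, central eps n traj (t 0%nat) (t tau) T ->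
       complexity_ge traj (t 0%nat) (t tau) T (c * INR tau * INR n ^ 2)).
Proof.
  exists (1 / 32). split; [lra|]. intros n tau Hn Htau.
  destruct (le_lt_dec n 4) as [Hsmall|Hlarge].
  - destruct (small_design n tau Hn Htau) as [Hpl [Hex Hcx]].
    exists 4. split; [lra|]. exists slab_time, small_traj.
    split; [exact Hpl | split; [exact Hex|]]. intros T HT.
    apply complexity_ge_weaken with (INR (tau * 1)); [apply scaled_square_le; nia|].
    rewrite Nat.mul_1_r. exact (Hcx T HT).
  - destruct (quarter_bounds n Hlarge) as [Hk1 Hk]. set (k := ((n - 1) / 4)%nat) in *.
    destruct (big_design n tau k Hk1 ltac:(lia) Htau) as [Hpl [Hex Hcx]].
    exists (2 * (height k + INR k ^ 2)).
    split; [unfold height; assert (Hk0 := pos_INR k); nra|].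
    exists slab_time, (big_traj k). split; [exact Hpl | split; [exact Hex|]]. intros T HT.
    apply complexity_ge_weaken with (INR (tau * (2 * k * k))); [apply scaled_square_le; nia|].
    replace (tau * (2 * k * k))%nat with (2 * k * tau * k)%nat by ring. exact (Hcx T HT).
Qed.
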